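(* Fix $k\in\mathcal{K}$ and an SU index $k'$. Consider problem (T1): maximize over $p_{k,k'}\ge0$, $b_{k,k'}\ge0$, $q_k\ge0$, $w_k\ge0$ $$EE_k=\frac{b_{k,k'}\log_2\!\Big(1+\frac{p_{k,k'}g_{k,k'}}{b_{k,k'}N_0}\Big)}{\frac{p_{k,k'}}{\xi}+\frac{q_k}{\xi}}$$ subject to $b_{k,k'}+w_k\le W^k_{MC}$ and $w_k\log_2\!\big(1+\frac{q_kh_k}{w_kN_0}\big)\ge R^k_{MC}$. Then (T1) is equivalent (same optimal value, with optimal $(p_{k,k'},w_k)$ corresponding) to the problem (T2): maximize over $p_{k,k'}\ge0$, $w_k\ge0$ $$EE_k=\frac{(W^k_{MC}-w_k)\log_2\!\Big(1+\frac{p_{k,k'}g_{k,k'}}{(W^k_{MC}-w_k)N_0}\Big)}{\frac{p_{k,k'}}{\xi}+\big(2^{R^k_{MC}/w_k}-1\big)\frac{w_kN_0}{h_k\xi}},$$ and the objective $EE_k$ of (T2) is strictly and jointly quasi-concave in $(p_{k,k'},w_k)$; hence (T2) is a quasi-concave maximization problem.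
   Context: Constants: $N_0>0$ noise spectral density, $\xi\in(0,1]$ power amplifier efficiency; for the macro user $k$: licensed bandwidth $W^k_{MC}>0$, minimum rate requirement $R^k_{MC}>0$, channel gain $h_k>0$ from the small-cell base station to MU $k$, and $g_{k,k'}>0$ the channel gain to small-cell user $k'$ on MU $k$'s bandwidth. The quantity $EE_k$ is the ''trading energy efficiency'' of MU $k$: rate gained by the small cell using part $b_{k,k'}$ of MU $k$'s band for SU $k'$, divided by the power spent on SU $k'$ and on serving MU $k$ with bandwidth $w_k$ and power $q_k$. Expressions are considered where defined, i.e. $0<w_k$ and $w_k\le W^k_{MC}$ (with $b\log_2(1+x/b)$ taken as $0$ at $b=0$). *)

From Stdlib Require Import Reals.
Open Scope R_scope.

Definition log2 (x : R) : R := ln x / ln 2.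

Definition rate (N0 gain b p : R) : R :=
  if Req_EM_T b 0 then 0 else b * log2 (1 + p * gain / (b * N0)).

Definition EE1 (N0 xi g p b q : R) : R :=
  rate N0 g b p / (p / xi + q / xi).

(* Feasible set of (T1) (w = w_k; 0 < w required for the constraint to be defined) *)
Definition feasible1 (N0 W RMC h p b q w : R) : Prop :=
  0 <= p /\ 0 <= b /\ 0 <= q /\ 0 < w /\
  b + w <= W /\ w * log2 (1 + q * h / (w * N0)) >= RMC.

Definition EE2 (N0 xi W RMC h g p w : R) : R :=
  rate N0 g (W - w) p /
  (p / xi + (Rpower 2 (RMC / w) - 1) * (w * N0 / (h * xi))).

(* Feasible set of (T2) (0 < w <= W, where the objective is defined) *)
Definition feasible2 (W p w : R) : Prop := 0 <= p /\ 0 < w /\ w <= W.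

(* The q_k corresponding to w_k: the power meeting the MU rate exactly *)
Definition qopt (N0 RMC h w : R) : R := (Rpower 2 (RMC / w) - 1) * (w * N0 / h).

Definition is_max1 (N0 xi W RMC h g p b q w : R) : Prop :=
  feasible1 N0 W RMC h p b q w /\
  forall p' b' q' w', feasible1 N0 W RMC h p' b' q' w' ->
    EE1 N0 xi g p' b' q' <= EE1 N0 xi g p b q.

Definition is_max2 (N0 xi W RMC h g p w : R) : Prop :=
  feasible2 W p w /\
  forall p' w', feasible2 W p' w' ->
    EE2 N0 xi W RMC h g p' w' <= EE2 N0 xi W RMC h g p w.

Definition quasiconcave_on (S : R -> R -> Prop) (f : R -> R -> R) : Prop :=
  forall x1 y1 x2 y2 t, S x1 y1 -> S x2 y2 -> 0 <= t <= 1 ->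
    Rmin (f x1 y1) (f x2 y2) <= f (t * x1 + (1 - t) * x2) (t * y1 + (1 - t) * y2).

Definition strictly_quasiconcave_on (S : R -> R -> Prop) (f : R -> R -> R) : Prop :=
  forall x1 y1 x2 y2 t, S x1 y1 -> S x2 y2 -> (x1, y1) <> (x2, y2) -> 0 < t < 1 ->
    Rmin (f x1 y1) (f x2 y2) < f (t * x1 + (1 - t) * x2) (t * y1 + (1 - t) * y2).

(** The bandwidth constraint is tight at the optimum because the rate
    [b log2 (1 + p g / (b N0))] is increasing in [b], and the MU rate
    constraint is tight because the objective decreases in [q_k]; solving it
    for equality gives [q_k = (2^(R/w) - 1) w N0 / h], which turns (T1) into
    (T2).  Both pieces of the (T2) objective are perspectives [b f (x / b)]:
    the numerator of the concave [f = ln (1 + .)], the circuit-power term of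
    the convex [f = exp].  Perspectives of concave functions are jointly
    concave, so (T2) is a ratio of a nonnegative concave function to a
    positive convex one, whose superlevel sets are convex. *)

From Stdlib Require Import Reals Lra Psatz.
Open Scope R_scope.

Lemma ln2_pos : 0 < ln 2.
Proof. pose proof ln_lt_2; lra. Qed.

Lemma ln_le_compat x y : 0 < x -> x <= y -> ln x <= ln y.
Proof.
  intros Hx Hxy; destruct (Rle_lt_or_eq _ _ Hxy) as [Hlt|<-]; [|lra].
  left; apply ln_increasing; lra.
Qed.

Lemma ln1p_lt_tangent z m : -1 < z -> -1 < m -> z <> m ->
  ln (1 + z) < ln (1 + m) + / (1 + m) * (z - m).
Proof.
  intros Hz Hm Hzm.
  assert (Hd : ln (1 + z) - ln (1 + m) <> 0).
  { intro E; apply Hzm; enough (1 + z = 1 + m) by lra; apply ln_inv; lra. }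
  pose proof (exp_ineq1 _ Hd) as Hexp; unfold Rminus in Hexp.
  rewrite exp_plus, exp_Ropp, !exp_ln in Hexp by lra.
  replace (/ (1 + m) * (z - m)) with ((1 + z) * / (1 + m) - 1) by (field; lra).
  lra.
Qed.

Lemma ln1p_le_tangent z m : -1 < z -> -1 < m ->
  ln (1 + z) <= ln (1 + m) + / (1 + m) * (z - m).
Proof.
  intros Hz Hm; destruct (Req_dec z m) as [->|Hzm].
  - rewrite Rminus_diag, Rmult_0_r; lra.
  - left; apply ln1p_lt_tangent; lra.
Qed.

Lemma exp_lt_tangent z m : z <> m -> exp m + exp m * (z - m) < exp z.
Proof.
  intro Hzm; assert (Hd : z - m <> 0) by lra.
  pose proof (exp_ineq1 _ Hd) as Hexp; pose proof (exp_pos m).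
  replace (exp z) with (exp m * exp (z - m)) by (rewrite <- exp_plus; f_equal; ring).
  nra.
Qed.

Lemma exp_le_tangent z m : exp m + exp m * (z - m) <= exp z.
Proof.
  destruct (Req_dec z m) as [->|Hzm]; [lra|].
  left; apply exp_lt_tangent; lra.
Qed.

Section Perspective.

Variables (f df : R -> R) (D : R -> Prop).
Hypothesis f_le_tangent :
  forall z m, D z -> D m -> f z <= f m + df m * (z - m).
Hypothesis f_lt_tangent :
  forall z m, D z -> D m -> z <> m -> f z < f m + df m * (z - m).

(* The tangent at the pooled point [m] is averaged with weights [b1], [b2],
   which cancel the slope terms. *)
Lemma perspective_tangent_mean b1 b2 x1 x2 :
  0 < b1 -> 0 < b2 ->
  let m := (x1 + x2) / (b1 + b2) in
  b1 * (f m + df m * (x1 / b1 - m)) + b2 * (f m + df m * (x2 / b2 - m))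
  = (b1 + b2) * f m.
Proof. intros Hb1 Hb2 m; unfold m; field; lra. Qed.

Lemma perspective_superadditive b1 b2 x1 x2 :
  0 < b1 -> 0 < b2 -> D (x1 / b1) -> D (x2 / b2) -> D ((x1 + x2) / (b1 + b2)) ->
  b1 * f (x1 / b1) + b2 * f (x2 / b2) <= (b1 + b2) * f ((x1 + x2) / (b1 + b2)).
Proof.
  intros Hb1 Hb2 D1 D2 Dm.
  pose proof (perspective_tangent_mean b1 b2 x1 x2 Hb1 Hb2) as Emean.
  pose proof (f_le_tangent _ _ D1 Dm) as T1.
  pose proof (f_le_tangent _ _ D2 Dm) as T2.
  simpl in Emean; nra.
Qed.

Lemma perspective_superadditive_strict b1 b2 x1 x2 :
  0 < b1 -> 0 < b2 -> D (x1 / b1) -> D (x2 / b2) -> D ((x1 + x2) / (b1 + b2)) ->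
  x1 * b2 <> x2 * b1 ->
  b1 * f (x1 / b1) + b2 * f (x2 / b2) < (b1 + b2) * f ((x1 + x2) / (b1 + b2)).
Proof.
  intros Hb1 Hb2 D1 D2 Dm Hne.
  assert (Hm : x1 / b1 <> (x1 + x2) / (b1 + b2)).
  { intro E; apply Hne.
    apply (f_equal (fun y => y * b1 * (b1 + b2))) in E.
    field_simplify in E; lra. }
  pose proof (perspective_tangent_mean b1 b2 x1 x2 Hb1 Hb2) as Emean.
  pose proof (f_lt_tangent _ _ D1 Dm Hm) as T1.
  pose proof (f_le_tangent _ _ D2 Dm) as T2.
  simpl in Emean; nra.
Qed.

End Perspective.

Lemma ln1p_superadditive b1 b2 x1 x2 :
  0 < b1 -> 0 < b2 -> 0 <= x1 -> 0 <= x2 ->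
  b1 * ln (1 + x1 / b1) + b2 * ln (1 + x2 / b2)
  <= (b1 + b2) * ln (1 + (x1 + x2) / (b1 + b2)).
Proof.
  intros Hb1 Hb2 Hx1 Hx2.
  assert (0 <= x1 / b1) by (apply Rle_mult_inv_pos; lra).
  assert (0 <= x2 / b2) by (apply Rle_mult_inv_pos; lra).
  assert (0 <= (x1 + x2) / (b1 + b2)) by (apply Rle_mult_inv_pos; lra).
  apply (perspective_superadditive (fun x => ln (1 + x)) (fun m => / (1 + m))
           (fun x => -1 < x) ln1p_le_tangent); lra.
Qed.

Lemma ln1p_superadditive_strict b1 b2 x1 x2 :
  0 < b1 -> 0 < b2 -> 0 <= x1 -> 0 <= x2 -> x1 * b2 <> x2 * b1 ->
  b1 * ln (1 + x1 / b1) + b2 * ln (1 + x2 / b2)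
  < (b1 + b2) * ln (1 + (x1 + x2) / (b1 + b2)).
Proof.
  intros Hb1 Hb2 Hx1 Hx2 Hne.
  assert (0 <= x1 / b1) by (apply Rle_mult_inv_pos; lra).
  assert (0 <= x2 / b2) by (apply Rle_mult_inv_pos; lra).
  assert (0 <= (x1 + x2) / (b1 + b2)) by (apply Rle_mult_inv_pos; lra).
  apply (perspective_superadditive_strict (fun x => ln (1 + x)) (fun m => / (1 + m))
           (fun x => -1 < x) ln1p_le_tangent ln1p_lt_tangent); [lra ..| exact Hne].
Qed.

Section Rate.

Variables (N0 g : R).
Hypotheses (HN0 : 0 < N0) (Hg : 0 < g).

Lemma rate_0 p : rate N0 g 0 p = 0.
Proof. unfold rate; destruct (Req_EM_T 0 0); [reflexivity | lra]. Qed.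

Lemma rate_perspective b p : 0 < b ->
  rate N0 g b p = b * ln (1 + p * (g / N0) / b) / ln 2.
Proof.
  intro Hb; unfold rate, log2; destruct (Req_EM_T b 0) as [|_]; [lra|].
  replace (p * g / (b * N0)) with (p * (g / N0) / b) by (field; lra).
  unfold Rdiv; ring.
Qed.

Lemma rate_ge0 b p : 0 <= b -> 0 <= p -> 0 <= rate N0 g b p.
Proof.
  intros Hb Hp; destruct (Req_dec b 0) as [->|Hb0]; [rewrite rate_0; lra|].
  rewrite rate_perspective by lra.
  assert (Hx : 0 <= p * (g / N0) / b).
  { apply Rle_mult_inv_pos; [apply Rmult_le_pos, Rle_mult_inv_pos|]; lra. }
  pose proof (ln_le_compat 1 (1 + p * (g / N0) / b) ltac:(lra) ltac:(lra)) as Hln.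
  rewrite ln_1 in Hln; pose proof ln2_pos.
  apply Rle_mult_inv_pos; [apply Rmult_le_pos|]; lra.
Qed.

Lemma rate_gt0 b p : 0 < b -> 0 < p -> 0 < rate N0 g b p.
Proof.
  intros Hb Hp; rewrite rate_perspective by lra.
  assert (Hx : 0 < p * (g / N0) / b).
  { apply Rlt_mult_inv_pos; [apply Rmult_lt_0_compat, Rlt_mult_inv_pos|]; lra. }
  pose proof (ln_increasing 1 (1 + p * (g / N0) / b) ltac:(lra) ltac:(lra)) as Hln.
  rewrite ln_1 in Hln; pose proof ln2_pos.
  apply Rlt_mult_inv_pos; [apply Rmult_lt_0_compat|]; lra.
Qed.

Lemma rate_scale t b p : 0 <= t -> rate N0 g (t * b) (t * p) = t * rate N0 g b p.
Proof.
  intro Ht; destruct (Req_dec t 0) as [->|Ht0].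
  { rewrite Rmult_0_l, rate_0; ring. }
  unfold rate; destruct (Req_EM_T b 0) as [->|Hb].
  - rewrite Rmult_0_r; destruct (Req_EM_T 0 0); [ring | lra].
  - destruct (Req_EM_T (t * b) 0) as [E|_].
    { apply Rmult_integral in E; lra. }
    replace (t * p * g / (t * b * N0)) with (p * g / (b * N0)) by (field; lra).
    ring.
Qed.

Lemma rate_le_power b p p' : 0 <= b -> 0 <= p -> p <= p' ->
  rate N0 g b p <= rate N0 g b p'.
Proof.
  intros Hb Hp Hpp; destruct (Req_dec b 0) as [->|Hb0]; [rewrite !rate_0; lra|].
  rewrite !rate_perspective by lra.
  assert (Hx : 0 <= p * (g / N0) / b).
  { apply Rle_mult_inv_pos; [apply Rmult_le_pos, Rle_mult_inv_pos|]; lra. }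
  assert (Hxx : p * (g / N0) / b <= p' * (g / N0) / b).
  { unfold Rdiv; apply Rmult_le_compat_r; [left; apply Rinv_0_lt_compat; lra|].
    apply Rmult_le_compat_r; [apply Rle_mult_inv_pos|]; lra. }
  pose proof (ln_le_compat (1 + p * (g / N0) / b) (1 + p' * (g / N0) / b)
                ltac:(lra) ltac:(lra)) as Hln.
  pose proof ln2_pos.
  apply Rmult_le_compat_r; [left; apply Rinv_0_lt_compat; lra|].
  apply Rmult_le_compat_l; lra.
Qed.

Lemma rate_superadditive b1 b2 p1 p2 :
  0 <= b1 -> 0 <= b2 -> 0 <= p1 -> 0 <= p2 ->
  rate N0 g b1 p1 + rate N0 g b2 p2 <= rate N0 g (b1 + b2) (p1 + p2).
Proof.
  intros Hb1 Hb2 Hp1 Hp2.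
  destruct (Req_dec b1 0) as [->|Hb10].
  { rewrite rate_0, !Rplus_0_l; apply rate_le_power; lra. }
  destruct (Req_dec b2 0) as [->|Hb20].
  { rewrite rate_0, !Rplus_0_r; apply rate_le_power; lra. }
  assert (Hc : 0 < g / N0) by (apply Rlt_mult_inv_pos; lra).
  rewrite !rate_perspective by lra; pose proof ln2_pos.
  replace ((p1 + p2) * (g / N0)) with (p1 * (g / N0) + p2 * (g / N0)) by ring.
  pose proof (ln1p_superadditive b1 b2 (p1 * (g / N0)) (p2 * (g / N0))
                ltac:(lra) ltac:(lra) ltac:(nra) ltac:(nra)).
  rewrite <- Rdiv_plus_distr; apply Rmult_le_compat_r;
    [left; apply Rinv_0_lt_compat|]; lra.
Qed.

Lemma rate_superadditive_strict b1 b2 p1 p2 :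
  0 < b1 -> 0 < b2 -> 0 <= p1 -> 0 <= p2 -> p1 * b2 <> p2 * b1 ->
  rate N0 g b1 p1 + rate N0 g b2 p2 < rate N0 g (b1 + b2) (p1 + p2).
Proof.
  intros Hb1 Hb2 Hp1 Hp2 Hne.
  assert (Hc : 0 < g / N0) by (apply Rlt_mult_inv_pos; lra).
  rewrite !rate_perspective by lra; pose proof ln2_pos.
  replace ((p1 + p2) * (g / N0)) with (p1 * (g / N0) + p2 * (g / N0)) by ring.
  assert (Hne' : p1 * (g / N0) * b2 <> p2 * (g / N0) * b1).
  { intro E; apply Hne, (Rmult_eq_reg_r (g / N0)); lra. }
  pose proof (ln1p_superadditive_strict b1 b2 (p1 * (g / N0)) (p2 * (g / N0))
                ltac:(lra) ltac:(lra) ltac:(nra) ltac:(nra) Hne').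
  rewrite <- Rdiv_plus_distr; apply Rmult_lt_compat_r;
    [apply Rinv_0_lt_compat|]; lra.
Qed.

Lemma rate_le_bandwidth b b' p : 0 <= b -> b <= b' -> 0 <= p ->
  rate N0 g b p <= rate N0 g b' p.
Proof.
  intros Hb Hbb Hp.
  pose proof (rate_superadditive b (b' - b) p 0 Hb ltac:(lra) Hp ltac:(lra)).
  pose proof (rate_ge0 (b' - b) 0 ltac:(lra) ltac:(lra)).
  replace (b + (b' - b)) with b' in * by ring; rewrite Rplus_0_r in *; lra.
Qed.

Lemma rate_concave t b1 b2 p1 p2 :
  0 <= t <= 1 -> 0 <= b1 -> 0 <= b2 -> 0 <= p1 -> 0 <= p2 ->
  t * rate N0 g b1 p1 + (1 - t) * rate N0 g b2 p2
  <= rate N0 g (t * b1 + (1 - t) * b2) (t * p1 + (1 - t) * p2).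
Proof.
  intros Ht Hb1 Hb2 Hp1 Hp2.
  rewrite <- !rate_scale by lra.
  apply rate_superadditive; nra.
Qed.

Lemma rate_concave_strict t b1 b2 p1 p2 :
  0 < t < 1 -> 0 < b1 -> 0 < b2 -> 0 <= p1 -> 0 <= p2 -> p1 * b2 <> p2 * b1 ->
  t * rate N0 g b1 p1 + (1 - t) * rate N0 g b2 p2
  < rate N0 g (t * b1 + (1 - t) * b2) (t * p1 + (1 - t) * p2).
Proof.
  intros Ht Hb1 Hb2 Hp1 Hp2 Hne.
  rewrite <- !rate_scale by lra.
  apply rate_superadditive_strict; try nra.
  intro E; apply Hne, (Rmult_eq_reg_l (t * (1 - t))); [|nra].
  replace (t * (1 - t) * (p1 * b2)) with (t * p1 * ((1 - t) * b2)) by ring.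
  rewrite E; ring.
Qed.

End Rate.

Lemma exp_perspective_subadditive_strict w1 w2 a1 a2 :
  0 < w1 -> 0 < w2 -> a1 * w2 <> a2 * w1 ->
  (w1 + w2) * exp ((a1 + a2) / (w1 + w2)) < w1 * exp (a1 / w1) + w2 * exp (a2 / w2).
Proof.
  intros Hw1 Hw2 Hne.
  enough (w1 * - exp (a1 / w1) + w2 * - exp (a2 / w2)
          < (w1 + w2) * - exp ((a1 + a2) / (w1 + w2))) by lra.
  apply (perspective_superadditive_strict (fun x => - exp x) (fun m => - exp m)
           (fun _ => True)); auto; intros z m _ _.
  - pose proof (exp_le_tangent z m); lra.
  - intro Hzm; pose proof (exp_lt_tangent z m Hzm); lra.
Qed.

(* The MU transmit power meeting the rate [R] exactly on bandwidth [w], in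
   units of [N0 / h]. *)
Definition mu_power (RMC w : R) : R := (Rpower 2 (RMC / w) - 1) * w.

Lemma mu_power_gt0 RMC w : 0 < RMC -> 0 < w -> 0 < mu_power RMC w.
Proof.
  intros HR Hw; unfold mu_power.
  assert (1 < Rpower 2 (RMC / w)).
  { rewrite <- (Rpower_O 2) by lra; apply Rpower_lt; [lra|].
    apply Rlt_mult_inv_pos; lra. }
  nra.
Qed.

Lemma mu_power_exp RMC w : 0 < w ->
  mu_power RMC w = w * exp (RMC * ln 2 / w) - w.
Proof.
  intro Hw; unfold mu_power, Rpower.
  replace (RMC / w * ln 2) with (RMC * ln 2 / w) by (field; lra); ring.
Qed.

Lemma mu_power_convex_strict RMC w1 w2 t :
  0 < RMC -> 0 < w1 -> 0 < w2 -> 0 < t < 1 -> w1 <> w2 ->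
  mu_power RMC (t * w1 + (1 - t) * w2)
  < t * mu_power RMC w1 + (1 - t) * mu_power RMC w2.
Proof.
  intros HR Hw1 Hw2 Ht Hne.
  set (a := RMC * ln 2).
  assert (Ha : 0 < a) by (pose proof ln2_pos; unfold a; nra).
  rewrite !mu_power_exp by nra; fold a.
  assert (Hne' : t * a * ((1 - t) * w2) <> (1 - t) * a * (t * w1)).
  { intro E; apply Hne.
    apply (Rmult_eq_reg_l (t * (1 - t) * a)); [lra|].
    assert (0 < t * (1 - t) * a) by (apply Rmult_lt_0_compat; nra); lra. }
  pose proof (exp_perspective_subadditive_strict (t * w1) ((1 - t) * w2)
                (t * a) ((1 - t) * a) ltac:(nra) ltac:(nra) Hne') as P.
  replace (t * a + (1 - t) * a) with a in P by ring.
  replace (t * a / (t * w1)) with (a / w1) in P by (field; lra).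
  replace ((1 - t) * a / ((1 - t) * w2)) with (a / w2) in P by (field; lra).
  lra.
Qed.

Lemma mu_power_convex RMC w1 w2 t :
  0 < RMC -> 0 < w1 -> 0 < w2 -> 0 <= t <= 1 ->
  mu_power RMC (t * w1 + (1 - t) * w2)
  <= t * mu_power RMC w1 + (1 - t) * mu_power RMC w2.
Proof.
  intros HR Hw1 Hw2 Ht.
  destruct (Req_dec t 0) as [->|Ht0].
  { replace (0 * w1 + (1 - 0) * w2) with w2 by ring; lra. }
  destruct (Req_dec t 1) as [->|Ht1].
  { replace (1 * w1 + (1 - 1) * w2) with w1 by ring; lra. }
  destruct (Req_dec w1 w2) as [<-|Hne].
  { replace (t * w1 + (1 - t) * w1) with w1 by ring; lra. }
  left; apply mu_power_convex_strict; lra.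
Qed.

Lemma Rmult_le_of_le_div x y z : 0 < z -> x <= y / z -> x * z <= y.
Proof.
  intros Hz Hxy; replace y with (y / z * z) by (field; lra).
  apply Rmult_le_compat_r; lra.
Qed.

Section RatioQuasiconcave.

Variables (t N1 N2 N D1 D2 D : R).
Hypotheses (HD1 : 0 < D1) (HD2 : 0 < D2) (HD : 0 < D).

Lemma Rmin_ratio_le :
  0 <= t <= 1 -> 0 <= N ->
  t * N1 + (1 - t) * N2 <= N -> D <= t * D1 + (1 - t) * D2 ->
  Rmin (N1 / D1) (N2 / D2) <= N / D.
Proof.
  intros Ht HN HNmix HDmix; set (r := Rmin (N1 / D1) (N2 / D2)).
  pose proof (Rmult_le_of_le_div r N1 D1 HD1 (Rmin_l _ _)).
  pose proof (Rmult_le_of_le_div r N2 D2 HD2 (Rmin_r _ _)).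
  assert (HND : 0 <= N / D) by (apply Rle_mult_inv_pos; lra).
  destruct (Rle_or_lt r 0) as [Hr|Hr]; [lra|].
  apply (Rmult_le_reg_r D); [lra|].
  replace (N / D * D) with N by (field; lra).
  nra.
Qed.

Lemma Rmin_ratio_lt :
  0 < t < 1 -> 0 < N1 -> 0 < N2 ->
  t * N1 + (1 - t) * N2 <= N -> D <= t * D1 + (1 - t) * D2 ->
  t * N1 + (1 - t) * N2 < N \/ D < t * D1 + (1 - t) * D2 ->
  Rmin (N1 / D1) (N2 / D2) < N / D.
Proof.
  intros Ht HN1 HN2 HNmix HDmix Hstrict; set (r := Rmin (N1 / D1) (N2 / D2)).
  pose proof (Rmult_le_of_le_div r N1 D1 HD1 (Rmin_l _ _)).
  pose proof (Rmult_le_of_le_div r N2 D2 HD2 (Rmin_r _ _)).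
  assert (Hr : 0 < r).
  { unfold r; apply Rmin_case; apply Rlt_mult_inv_pos; lra. }
  apply (Rmult_lt_reg_r D); [lra|].
  replace (N / D * D) with N by (field; lra).
  destruct Hstrict; nra.
Qed.

End RatioQuasiconcave.

Section Transformation.

Variables (N0 xi W RMC h g : R).
Hypotheses (HN0 : 0 < N0) (Hxi : 0 < xi) (HR : 0 < RMC) (Hh : 0 < h) (Hg : 0 < g).

Lemma qopt_mu_power w : qopt N0 RMC h w = mu_power RMC w * (N0 / h).
Proof. unfold qopt, mu_power; field; lra. Qed.

Lemma feasible1_feasible2 p b q w :
  feasible1 N0 W RMC h p b q w -> feasible2 W p w.
Proof. intros (Hp & Hb & _ & Hw & HbW & _); repeat split; lra. Qed.

Lemma feasible1_qopt p w :
  feasible2 W p w -> feasible1 N0 W RMC h p (W - w) (qopt N0 RMC h w) w.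
Proof.
  intros (Hp & Hw & HwW).
  assert (Hq : 0 <= qopt N0 RMC h w).
  { rewrite qopt_mu_power; pose proof (mu_power_gt0 RMC w HR Hw).
    assert (0 < N0 / h) by (apply Rlt_mult_inv_pos; lra); nra. }
  repeat split; try lra.
  replace (1 + qopt N0 RMC h w * h / (w * N0)) with (Rpower 2 (RMC / w))
    by (unfold qopt; field; lra).
  unfold log2; rewrite ln_Rpower; pose proof ln2_pos.
  right; field; lra.
Qed.

Lemma qopt_le p b q w : feasible1 N0 W RMC h p b q w -> qopt N0 RMC h w <= q.
Proof.
  intros (_ & _ & Hq & Hw & _ & Hrate); pose proof ln2_pos.
  set (z := 1 + q * h / (w * N0)) in *.
  assert (Hz : 1 <= z).
  { enough (0 <= q * h / (w * N0)) by (unfold z; lra).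
    apply Rle_mult_inv_pos; nra. }
  assert (Hexponent : RMC / w * ln 2 <= ln z).
  { unfold log2 in Hrate.
    apply (Rmult_le_reg_r (w / ln 2)); [apply Rlt_mult_inv_pos; lra|].
    replace (RMC / w * ln 2 * (w / ln 2)) with RMC by (field; lra).
    replace (ln z * (w / ln 2)) with (w * (ln z / ln 2)) by (field; lra).
    lra. }
  assert (Hpow : Rpower 2 (RMC / w) <= z).
  { unfold Rpower; rewrite <- (exp_ln z) by lra.
    destruct (Rle_lt_or_eq _ _ Hexponent) as [Hlt | ->]; [left; apply exp_increasing|]; lra. }
  unfold qopt, z in *.
  replace q with (q * h / (w * N0) * (w * N0 / h)) by (field; lra).
  apply Rmult_le_compat_r; [apply Rle_mult_inv_pos; nra | lra].
Qed.

Lemma EE1_qopt p w : 0 < w ->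
  EE1 N0 xi g p (W - w) (qopt N0 RMC h w) = EE2 N0 xi W RMC h g p w.
Proof. intro Hw; unfold EE1, EE2, qopt; f_equal; f_equal; field; lra. Qed.

Lemma EE2_mu_power p w :
  EE2 N0 xi W RMC h g p w
  = rate N0 g (W - w) p / (p / xi + mu_power RMC w * (N0 / (h * xi))).
Proof. unfold EE2, mu_power; f_equal; f_equal; field; lra. Qed.

Lemma EE2_denominator_gt0 p w : 0 <= p -> 0 < w ->
  0 < p / xi + mu_power RMC w * (N0 / (h * xi)).
Proof.
  intros Hp Hw; pose proof (mu_power_gt0 RMC w HR Hw).
  assert (0 <= p / xi) by (apply Rle_mult_inv_pos; lra).
  assert (0 < N0 / (h * xi)) by (apply Rlt_mult_inv_pos; nra).
  nra.
Qed.

Lemma EE1_le_EE2 p b q w :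
  feasible1 N0 W RMC h p b q w -> EE1 N0 xi g p b q <= EE2 N0 xi W RMC h g p w.
Proof.
  intros F; pose proof (qopt_le p b q w F) as Hq.
  destruct F as (Hp & Hb & _ & Hw & HbW & _).
  rewrite <- EE1_qopt by lra; unfold EE1.
  assert (Hden : 0 < p / xi + qopt N0 RMC h w / xi).
  { rewrite qopt_mu_power.
    replace (mu_power RMC w * (N0 / h) / xi)
      with (mu_power RMC w * (N0 / (h * xi))) by (field; lra).
    apply EE2_denominator_gt0; lra. }
  assert (Hqxi : qopt N0 RMC h w / xi <= q / xi).
  { apply Rmult_le_compat_r; [left; apply Rinv_0_lt_compat|]; lra. }
  unfold Rdiv at 1 4; apply Rmult_le_compat.
  - apply rate_ge0; lra.
  - left; apply Rinv_0_lt_compat; lra.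
  - apply rate_le_bandwidth; lra.
  - apply Rinv_le_contravar; lra.
Qed.

Lemma EE2_denominator_convex t p1 p2 w1 w2 :
  0 <= t <= 1 -> 0 < w1 -> 0 < w2 ->
  (t * p1 + (1 - t) * p2) / xi
    + mu_power RMC (t * w1 + (1 - t) * w2) * (N0 / (h * xi))
  <= t * (p1 / xi + mu_power RMC w1 * (N0 / (h * xi)))
     + (1 - t) * (p2 / xi + mu_power RMC w2 * (N0 / (h * xi))).
Proof.
  intros Ht Hw1 Hw2.
  pose proof (mu_power_convex RMC w1 w2 t HR Hw1 Hw2 Ht).
  assert (0 < N0 / (h * xi)) by (apply Rlt_mult_inv_pos; nra).
  replace ((t * p1 + (1 - t) * p2) / xi) with (t * (p1 / xi) + (1 - t) * (p2 / xi))
    by (field; lra).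
  nra.
Qed.

Lemma EE2_denominator_convex_strict t p1 p2 w1 w2 :
  0 < t < 1 -> 0 < w1 -> 0 < w2 -> w1 <> w2 ->
  (t * p1 + (1 - t) * p2) / xi
    + mu_power RMC (t * w1 + (1 - t) * w2) * (N0 / (h * xi))
  < t * (p1 / xi + mu_power RMC w1 * (N0 / (h * xi)))
    + (1 - t) * (p2 / xi + mu_power RMC w2 * (N0 / (h * xi))).
Proof.
  intros Ht Hw1 Hw2 Hne.
  pose proof (mu_power_convex_strict RMC w1 w2 t HR Hw1 Hw2 Ht Hne).
  assert (0 < N0 / (h * xi)) by (apply Rlt_mult_inv_pos; nra).
  replace ((t * p1 + (1 - t) * p2) / xi) with (t * (p1 / xi) + (1 - t) * (p2 / xi))
    by (field; lra).
  nra.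
Qed.

Lemma EE2_quasiconcave : quasiconcave_on (feasible2 W) (EE2 N0 xi W RMC h g).
Proof.
  intros p1 w1 p2 w2 t (Hp1 & Hw1 & HwW1) (Hp2 & Hw2 & HwW2) Ht.
  rewrite !EE2_mu_power.
  apply Rmin_ratio_le with t; try (apply EE2_denominator_gt0; nra).
  - exact Ht.
  - apply rate_ge0; nra.
  - replace (W - (t * w1 + (1 - t) * w2)) with (t * (W - w1) + (1 - t) * (W - w2))
      by ring.
    apply rate_concave; lra.
  - apply EE2_denominator_convex; lra.
Qed.

Lemma EE2_strictly_quasiconcave :
  strictly_quasiconcave_on (fun p w => 0 < p /\ 0 < w < W) (EE2 N0 xi W RMC h g).
Proof.
  intros p1 w1 p2 w2 t (Hp1 & Hw1 & HwW1) (Hp2 & Hw2 & HwW2) Hne Ht.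
  rewrite !EE2_mu_power.
  replace (W - (t * w1 + (1 - t) * w2)) with (t * (W - w1) + (1 - t) * (W - w2))
    by ring.
  apply Rmin_ratio_lt with t; try (apply EE2_denominator_gt0; nra);
    try (apply rate_gt0; lra); [lra | apply rate_concave; lra
                                | apply EE2_denominator_convex; lra |].
  (* On a segment of constant [w] only the numerator can be strictly concave. *)
  destruct (Req_dec w1 w2) as [<-|Hw].
  - left; apply rate_concave_strict; try lra.
    intro E; apply Hne; f_equal; apply (Rmult_eq_reg_r (W - w1)); lra.
  - right; apply EE2_denominator_convex_strict; lra.
Qed.

End Transformation.

Theorem theorem3 (N0 xi W RMC h g : R)
  (HN0 : 0 < N0) (Hxi : 0 < xi <= 1) (HW : 0 < W) (HR : 0 < RMC)
  (Hh : 0 < h) (Hg : 0 < g) :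
  (* same optimal value: (T1) and (T2) have the same upper bounds, hence the same supremum *)
  (forall v,
     (forall p b q w, feasible1 N0 W RMC h p b q w -> EE1 N0 xi g p b q <= v) <->
     (forall p w, feasible2 W p w -> EE2 N0 xi W RMC h g p w <= v)) /\
  (* optimal (p,w) correspond *)
  (forall p b q w, is_max1 N0 xi W RMC h g p b q w -> is_max2 N0 xi W RMC h g p w) /\
  (forall p w, is_max2 N0 xi W RMC h g p w ->
     is_max1 N0 xi W RMC h g p (W - w) (qopt N0 RMC h w) w) /\
  (* the (T2) objective is jointly quasi-concave on the feasible set *)
  quasiconcave_on (feasible2 W) (EE2 N0 xi W RMC h g) /\
  (* and strictly jointly quasi-concave where it is positive (p > 0, 0 < w < W) *)
  strictly_quasiconcave_on (fun p w => 0 < p /\ 0 < w < W) (EE2 N0 xi W RMC h g).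
Proof.
  pose proof (feasible1_feasible2 N0 W RMC h) as F12.
  pose proof (feasible1_qopt N0 W RMC h HN0 HR Hh) as F21.
  pose proof (EE1_le_EE2 N0 xi W RMC h g HN0 ltac:(lra) HR Hh Hg) as Hle.
  assert (Heq : forall p w, feasible2 W p w ->
            EE1 N0 xi g p (W - w) (qopt N0 RMC h w) = EE2 N0 xi W RMC h g p w).
  { intros p w (_ & Hw & _); apply EE1_qopt; lra. }
  split; [|split; [|split; [|split]]].
  - intro v; split.
    + intros Hv p w F; rewrite <- Heq by exact F; eapply Hv, F21, F.
    + intros Hv p b q w F; eapply Rle_trans; [apply Hle, F | apply Hv; eapply F12, F].
  - intros p b q w [F Hmax]; split; [eapply F12, F|].
    intros p' w' F'; rewrite <- Heq by exact F'.
    eapply Rle_trans; [eapply Hmax, F21, F' | apply Hle, F].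
  - intros p w [F Hmax]; split; [apply F21, F|].
    intros p' b' q' w' F'; rewrite Heq by exact F.
    eapply Rle_trans; [apply Hle, F' | apply Hmax; eapply F12, F'].
  - apply EE2_quasiconcave; lra.
  - apply EE2_strictly_quasiconcave; lra.
Qed.
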